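(* Let $Q$ be an equivariantly supported quantal frame with base locale $Q_0$ and support $\varsigma$. Then for all $x\in R(Q)$ and $y\in Q$ we have $\varsigma(x\wedge y)=\varsigma(x)\wedge\varsigma(y)$.
   Context: For a locale $A$, an $A$-$A$-bimodule is a sup-lattice $M$ with actions $a\triangleright m$, $m\triangleleft a$ preserving joins in each variable, with $1_A\triangleright m=m$, $(a\wedge b)\triangleright m=a\triangleright(b\triangleright m)$, $m\triangleleft1_A=m$, $m\triangleleft(a\wedge b)=(m\triangleleft a)\triangleleft b$, $(a\triangleright m)\triangleleft b=a\triangleright(m\triangleleft b)$. An $A$-$A$-quantale is such a $Q$ with associative join-preserving multiplication and $(a\triangleright x)y=a\triangleright(xy)$, $(x\triangleleft a)y=x(a\triangleright y)$, $(xy)\triangleleft a=x(y\triangleleft a)$; involutive if there is a join-preserving $x\mapsto x^*$ with $x^{**}=x$, $(xy)^*=y^*x^*$, $(a\triangleright(x\triangleleft b))^*=b\triangleright(x^*\triangleleft a)$. $1_Q$ is the top. A support is a join-preserving $\varsigma:Q\to Q_0$ with $\varsigma(1_Q)=1_{Q_0}$, $\varsigma(x)\triangleright y\le xx^*y$, $\varsigma(x)\triangleright x=x$; equivariant if $\varsigma(a\triangleright x)=a\wedge\varsigma(x)$. An equivariantly supported quantal frame is an involutive $Q_0$-$Q_0$-quantale with an equivariant support whose lattice is a frame and such that $(a\triangleright x)\wedge y=a\triangleright(x\wedge y)$ and $(x\triangleleft a)\wedge y=(x\wedge y)\triangleleft a$ for all $a\in Q_0$, $x,y\in Q$. $R(Q)=\{x\in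 Q\mid x1_Q\le x\}$. *)

Set Implicit Arguments.

Record SupLattice := {
  sl_car :> Type;
  sl_le : sl_car -> sl_car -> Prop;
  sl_refl : forall x, sl_le x x;
  sl_trans : forall x y z, sl_le x y -> sl_le y z -> sl_le x z;
  sl_antisym : forall x y, sl_le x y -> sl_le y x -> x = y;
  sl_sup : (sl_car -> Prop) -> sl_car;
  sl_sup_ub : forall (S : sl_car -> Prop) x, S x -> sl_le x (sl_sup S);
  sl_sup_least : forall (S : sl_car -> Prop) y,
      (forall x, S x -> sl_le x y) -> sl_le (sl_sup S) y
}.

Arguments sl_le {s} _ _.
Arguments sl_sup {s} _.

Definition top (L : SupLattice) : L := sl_sup (fun _ : L => True).
Definition meet {L : SupLattice} (x y : L) : L :=
  sl_sup (fun z => sl_le z x /\ sl_le z y).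

Definition img {A B : Type} (f : A -> B) (S : A -> Prop) : B -> Prop :=
  fun b => exists a, S a /\ b = f a.

Definition join_pres {L M : SupLattice} (f : L -> M) : Prop :=
  forall S : L -> Prop, f (sl_sup S) = sl_sup (img f S).

Definition is_frame (L : SupLattice) : Prop :=
  forall (a : L) (S : L -> Prop), meet a (sl_sup S) = sl_sup (img (meet a) S).

Definition is_bimodule (A M : SupLattice)
    (lact : A -> M -> M) (ract : M -> A -> M) : Prop :=
  (forall a, join_pres (lact a)) /\
  (forall m, join_pres (fun a : A => lact a m)) /\
  (forall a, join_pres (fun m : M => ract m a)) /\
  (forall m, join_pres (ract m)) /\
  (forall m, lact (top A) m = m) /\
  (forall a b m, lact (meet a b) m = lact a (lact b m)) /\
  (forall m, ract m (top A) = m) /\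
  (forall a b m, ract m (meet a b) = ract (ract m a) b) /\
  (forall a b m, ract (lact a m) b = lact a (ract m b)).

Arguments is_bimodule {A M} _ _.

Definition is_quantale (A Q : SupLattice)
    (lact : A -> Q -> Q) (ract : Q -> A -> Q) (mul : Q -> Q -> Q) : Prop :=
  is_bimodule lact ract /\
  (forall x y z, mul (mul x y) z = mul x (mul y z)) /\
  (forall x, join_pres (mul x)) /\
  (forall y, join_pres (fun x : Q => mul x y)) /\
  (forall a x y, mul (lact a x) y = lact a (mul x y)) /\
  (forall a x y, mul (ract x a) y = mul x (lact a y)) /\
  (forall a x y, ract (mul x y) a = mul x (ract y a)).

Arguments is_quantale {A Q} _ _ _.

Definition is_involutive_quantale (A Q : SupLattice)
    (lact : A -> Q -> Q) (ract : Q -> A -> Q) (mul : Q -> Q -> Q)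
    (inv : Q -> Q) : Prop :=
  is_quantale lact ract mul /\
  join_pres inv /\
  (forall x, inv (inv x) = x) /\
  (forall x y, inv (mul x y) = mul (inv y) (inv x)) /\
  (forall a b x, inv (lact a (ract x b)) = lact b (ract (inv x) a)).

Arguments is_involutive_quantale {A Q} _ _ _ _.

Definition is_support (A Q : SupLattice)
    (lact : A -> Q -> Q) (mul : Q -> Q -> Q) (inv : Q -> Q)
    (supp : Q -> A) : Prop :=
  join_pres supp /\
  supp (top Q) = top A /\
  (forall x y, sl_le (lact (supp x) y) (mul (mul x (inv x)) y)) /\
  (forall x, lact (supp x) x = x).

Arguments is_support {A Q} _ _ _ _.

Definition is_equivariant (A Q : SupLattice)
    (lact : A -> Q -> Q) (supp : Q -> A) : Prop :=
  forall a x, supp (lact a x) = meet a (supp x).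

Arguments is_equivariant {A Q} _ _.

(** Equivariantly supported quantal frame, with base locale A. *)
Definition is_ESQF (A Q : SupLattice)
    (lact : A -> Q -> Q) (ract : Q -> A -> Q) (mul : Q -> Q -> Q)
    (inv : Q -> Q) (supp : Q -> A) : Prop :=
  is_frame A /\
  is_involutive_quantale lact ract mul inv /\
  is_support lact mul inv supp /\
  is_equivariant lact supp /\
  is_frame Q /\
  (forall a x y, meet (lact a x) y = lact a (meet x y)) /\
  (forall a x y, meet (ract x a) y = ract (meet x y) a).

Arguments is_ESQF {A Q} _ _ _ _ _.

Definition RQ (Q : SupLattice) (mul : Q -> Q -> Q) (x : Q) : Prop :=
  sl_le (mul x (top Q)) x.

Arguments RQ {Q} _ _.

(* For x in R(Q) the support of x acts below x: ς(x) ▷ y ≤ x x* y ≤ x 1 ≤ x.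
   Hence, with a = ς(x) ∧ ς(y), the element a ▷ y lies below both x and y,
   and by equivariance its support is a ∧ ς(y) = a; monotonicity of ς then
   gives a ≤ ς(x ∧ y).  The converse inequality is monotonicity alone. *)

Lemma join_pres_mono {L M : SupLattice} {f : L -> M} :
  join_pres f -> forall x y, sl_le x y -> sl_le (f x) (f y).
Proof.
  intros Hf x y Hxy.
  assert (Ejoin : sl_sup (fun z => z = x \/ z = y) = y).
  { apply sl_antisym.
    - apply sl_sup_least. intros z [-> | ->]; [exact Hxy | apply sl_refl].
    - apply sl_sup_ub. now right. }
  rewrite <- Ejoin, Hf. apply sl_sup_ub. exists x. now split; [left |].
Qed.

Lemma le_top {L : SupLattice} (x : L) : sl_le x (top L).
Proof. now apply sl_sup_ub. Qed.

Lemma meet_le_l {L : SupLattice} (x y : L) : sl_le (meet x y) x.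
Proof. apply sl_sup_least. now intros z [Hzx _]. Qed.

Lemma meet_le_r {L : SupLattice} (x y : L) : sl_le (meet x y) y.
Proof. apply sl_sup_least. now intros z [_ Hzy]. Qed.

Lemma meet_glb {L : SupLattice} (x y z : L) :
  sl_le z x -> sl_le z y -> sl_le z (meet x y).
Proof. intros Hzx Hzy. now apply sl_sup_ub. Qed.

Lemma meet_idPl {L : SupLattice} (x y : L) : sl_le x y -> meet x y = x.
Proof.
  intros Hxy. apply sl_antisym.
  - apply meet_le_l.
  - apply meet_glb; [apply sl_refl | exact Hxy].
Qed.

Lemma join_pres_meet {L M : SupLattice} {f : L -> M} (x y : L) :
  join_pres f -> sl_le (f (meet x y)) (meet (f x) (f y)).
Proof.
  intros Hf. apply meet_glb; apply (join_pres_mono Hf).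
  - apply meet_le_l.
  - apply meet_le_r.
Qed.

Lemma lact_le {A M : SupLattice} {lact : A -> M -> M} {ract : M -> A -> M}
    (a : A) (m : M) :
  is_bimodule lact ract -> sl_le (lact a m) m.
Proof.
  intros (_ & Hjoin_l & _ & _ & Htop & _).
  apply sl_trans with (lact (top A) m).
  - apply (join_pres_mono (Hjoin_l m)), le_top.
  - rewrite Htop. apply sl_refl.
Qed.

Lemma supp_lact_le_RQ {A Q : SupLattice}
    {lact : A -> Q -> Q} {ract : Q -> A -> Q} {mul : Q -> Q -> Q}
    {inv : Q -> Q} {supp : Q -> A} (x y : Q) :
  is_quantale lact ract mul -> is_support lact mul inv supp -> RQ mul x ->
  sl_le (lact (supp x) y) x.
Proof.
  intros (_ & Hassoc & Hjoin_mul & _) (_ & _ & Hsupp_le & _) Hx.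
  eapply sl_trans; [apply Hsupp_le |].
  rewrite Hassoc.
  eapply sl_trans; [apply (join_pres_mono (Hjoin_mul x)), le_top | exact Hx].
Qed.

Lemma supp_lact {A Q : SupLattice} {lact : A -> Q -> Q} {supp : Q -> A}
    (a : A) (y : Q) :
  is_equivariant lact supp -> sl_le a (supp y) -> supp (lact a y) = a.
Proof. intros Hequiv Ha. rewrite Hequiv. now apply meet_idPl. Qed.

Theorem lemma4p3 (A Q : SupLattice)
    (lact : A -> Q -> Q) (ract : Q -> A -> Q) (mul : Q -> Q -> Q)
    (inv : Q -> Q) (supp : Q -> A) :
  is_ESQF lact ract mul inv supp ->
  forall x y : Q, RQ mul x ->
    supp (meet x y) = meet (supp x) (supp y).
Proof.
  intros (_ & (Hquantale & _) & Hsupp & Hequiv & _) x y Hx.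
  pose proof (proj1 Hquantale) as Hbimod.
  pose proof (join_pres_mono (proj1 Hsupp)) as Hsupp_mono.
  apply sl_antisym; [exact (join_pres_meet x y (proj1 Hsupp)) |].
  set (a := meet (supp x) (supp y)).
  assert (Hay_x : sl_le (lact a y) x).
  { eapply sl_trans; [| exact (supp_lact_le_RQ x y Hquantale Hsupp Hx)].
    apply (join_pres_mono (proj1 (proj2 Hbimod) y)), meet_le_l. }
  rewrite <- (supp_lact a y Hequiv (meet_le_r (supp x) (supp y))).
  apply Hsupp_mono, meet_glb; [exact Hay_x | exact (lact_le a y Hbimod)].
Qed.
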